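(* In every state $\mathbf{x}$ of the common-chunk-protocol Markov process (with $k\ge 2$ chunks and any $\lambda>0$), for every chunk $i\in\{1,\dots,k\}$, \[ r\;\ge\;\frac{\bar S_i}{6}\, dS_i^+ \qquad\text{and}\qquad dS_i^+\le \frac{\bar S_i}{S}. \]
   Context: Model: Fix an integer $k\ge 2$ (number of chunks of a file) and $\lambda>0$. There is always exactly one seed holding all $k$ chunks. Non-seed peers arrive according to a Poisson process of rate $\lambda$, each arriving with no chunks; each non-seed peer holds a subset (its profile) of $\{1,\dots,k\}$ and leaves the system immediately once it holds all $k$ chunks. The state $\mathbf{x}$ of the continuous-time Markov process is the number of non-seed peers with each profile. $S$ denotes the total number of peers present, including the seed. Each non-seed peer has an independent rate-1 Poisson clock; at each tick it draws a sample of peers independently and uniformly at random with replacement from the current $S$ peers (seed and itself included) and may instantaneously download at most one chunk that it lacks and that is held by some sampled peer (such a chunk is a ''match''). Counting draws with multiplicity, a chunk is ''rare'' in a sample of 3 draws if exactly one of the 3 draws holds it. Common chunk protocol: (i) a peer with no chunks draws 3 peers and downloads a chunk chosen uniformly among the rare matches, if there is any, otherwise nothing; (ii) a peer holding at least 1 and at most $k-2$ chunks draws 1 peer and downloads a uniformly chosen match, if any, otherwise nothing; (iii) a peer holding exactly $k-1$ chunks draws 3 peers and downloads its missing chunk only if that chunk is held by some draw and every chunk it holds is held by at least 2 of the 3 draws; otherwise nothing. Notation: $S_i$ ($1\le i\le k$) is the number of peers, including the seed, holding chunk $i$; $\bar S_i=S-S_i$. $r=r(\mathbf{x})$ is the total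 rate of download events in state $\mathbf{x}$, i.e. the sum over all non-seed peers of the probability that a clock tick of that peer results in a download. $dS_i^+=dS_i^+(\mathbf{x})$ is the probability that a clock tick of a peer holding no chunks results in that peer downloading chunk $i$. *)

From HB Require Import structures.
From mathcomp Require Import all_boot all_order all_algebra.
Set Implicit Arguments. Unset Strict Implicit. Unset Printing Implicit Defensive.
Import Order.TTheory GRing.Theory Num.Theory.
Local Open Scope ring_scope.

(* Chunks are 'I_k (0-based).  A state x assigns
   to every profile the number of NON-seed peers with that profile; peers
   holding all chunks leave, so a valid state has x setT = 0. *)

(* number of peers (seed included) with profile A *)
Definition weight (k : nat) (x : {set 'I_k} -> nat) (A : {set 'I_k}) : nat :=
  (x A + (A == setT))%N.

Definition Stot (k : nat) (x : {set 'I_k} -> nat) : nat :=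
  (\sum_(A : {set 'I_k}) weight x A)%N.

Definition Shold (k : nat) (x : {set 'I_k} -> nat) (i : 'I_k) : nat :=
  (\sum_(A : {set 'I_k} | i \in A) weight x A)%N.

Definition Sbar (k : nat) (x : {set 'I_k} -> nat) (i : 'I_k) : nat :=
  (Stot x - Shold x i)%N.

Definition nhold (k : nat) (A B C : {set 'I_k}) (j : 'I_k) : nat :=
  ((j \in A) + (j \in B) + (j \in C))%N.

Definition rare (k : nat) (A B C : {set 'I_k}) (j : 'I_k) : bool :=
  nhold A B C j == 1%N.

Definition prob1 (R : realFieldType) (k : nat) (x : {set 'I_k} -> nat)
  (A : {set 'I_k}) : R := (weight x A)%:R / (Stot x)%:R.

Definition prob3 (R : realFieldType) (k : nat) (x : {set 'I_k} -> nat)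
  (A B C : {set 'I_k}) : R := prob1 R x A * prob1 R x B * prob1 R x C.

(* dS_i^+ : probability that a tick of a peer holding no chunks results in
   downloading chunk i (uniform choice among the rare matches). *)
Definition dSplus (R : realFieldType) (k : nat) (x : {set 'I_k} -> nat)
  (i : 'I_k) : R :=
  \sum_(A : {set 'I_k}) \sum_(B : {set 'I_k}) \sum_(C : {set 'I_k})
    prob3 R x A B C *
    (if rare A B C i then ((#|[set j | rare A B C j]|)%:R)^-1 else 0).

(* probability that a clock tick of a non-seed peer with profile P results
   in a download, under the common chunk protocol *)
Definition pdl (R : realFieldType) (k : nat) (x : {set 'I_k} -> nat)
  (P : {set 'I_k}) : R :=
  if #|P| == 0%N then
    \sum_(A : {set 'I_k}) \sum_(B : {set 'I_k}) \sum_(C : {set 'I_k})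
      prob3 R x A B C * (nat_of_bool [exists j, rare A B C j])%:R
  else if (#|P| <= k - 2)%N then
    \sum_(A : {set 'I_k}) prob1 R x A * (nat_of_bool (~~ (A \subset P)))%:R
  else
    (* (iii) |P| = k-1: 3 draws, missing chunk held by some draw and every
       held chunk held by at least 2 of the 3 draws *)
    \sum_(A : {set 'I_k}) \sum_(B : {set 'I_k}) \sum_(C : {set 'I_k})
      prob3 R x A B C *
      (nat_of_bool ([exists j, (j \notin P) && (0 < nhold A B C j)%N] &&
                    [forall j, (j \in P) ==> (2 <= nhold A B C j)%N]))%:R.

Definition rate (R : realFieldType) (k : nat) (x : {set 'I_k} -> nat) : R :=
  \sum_(P : {set 'I_k} | P != setT) (x P)%:R * pdl R x P.

(* Write p = S_i/S and u = Sbar_i/S (so p + u = 1), let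
   Q = [set~ i] be the profile lacking only chunk i, a = x Q, and let r be the
   number of the remaining non-seed peers lacking i, so that Sbar_i = a + r
   (the seed holds i).
   - A tick of an empty peer can only yield chunk i when i is rare among the
     three draws, so dS_i^+ <= P(i rare) = 3 p u^2; since p u <= 1/4 this is
     at most u, which is the second claim.
   - Every peer lacking i downloads with probability at least p u^2 (an empty
     peer whenever i is rare, a peer with 1..k-2 chunks whenever its draw holds
     i), and a peer with profile Q at least 3 (a/S)^2 p (two draws are Q and
     the third holds i).  Hence the rate is at least a 3 (a/S)^2 p + r p u^2.
   - Finally (a+r)/6 * 3 p u^2 <= a 3 (a/S)^2 p + r p u^2 reduces to the cubic
     inequality (a+r)^3/2 <= 3a^3 + r(a+r)^2, an explicit sum of squares. *)

From HB Require Import structures.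
From mathcomp Require Import all_boot all_order all_algebra.
From mathcomp Require Import ring lra zify.
Import Order.TTheory GRing.Theory Num.Theory.
Set Implicit Arguments. Unset Strict Implicit. Unset Printing Implicit Defensive.
Local Open Scope ring_scope.

Lemma ler_indicator (R : numDomainType) (b c : bool) : (b -> c) -> b%:R <= c%:R :> R.
Proof. by case: b; case: c => // /(_ isT). Qed.

Lemma natr_and3 (R : pzSemiRingType) (b1 b2 b3 : bool) :
  (b1 && b2 && b3)%:R = b1%:R * b2%:R * b3%:R :> R.
Proof. by rewrite -!mulnb !natrM. Qed.

(* The cubic inequality behind the factor 1/6: with s = a + r,
   3a^3 + r s^2 - s^3/2 = (a - s/3)^2 (3a + 2s) + 5/18 s^3 >= 0. *)
Lemma cubic_mix (R : realFieldType) (a r : R) : 0 <= a -> 0 <= r ->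
  (a + r) ^+ 3 / 2 <= 3 * a ^+ 3 + r * (a + r) ^+ 2.
Proof.
move=> a0 r0; set s := a + r.
have s0 : 0 <= s by rewrite addr_ge0.
have sos : 3 * a ^+ 3 + r * s ^+ 2 - s ^+ 3 / 2 =
    (a - s / 3) ^+ 2 * (3 * a + 2 * s) + 5 / 18 * s ^+ 3 by rewrite /s; field.
rewrite -subr_ge0 sos addr_ge0 //.
  by rewrite mulr_ge0 ?sqr_ge0 //; lra.
by rewrite mulr_ge0 ?exprn_ge0 //; lra.
Qed.

Lemma lacker_mixing (R : realFieldType) (S a r p : R) :
  0 < S -> 0 <= a -> 0 <= r -> 0 <= p ->
  (a + r) / 6 * (3 * p * ((a + r) / S) ^+ 2) <=
  a * (3 * (a / S) ^+ 2 * p) + r * (p * ((a + r) / S) ^+ 2).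
Proof.
move=> S0 a0 r0 p0; have S_neq0 : S != 0 by rewrite gt_eqF.
have -> : (a + r) / 6 * (3 * p * ((a + r) / S) ^+ 2) =
    p / S ^+ 2 * ((a + r) ^+ 3 / 2) by field.
have -> : a * (3 * (a / S) ^+ 2 * p) + r * (p * ((a + r) / S) ^+ 2) =
    p / S ^+ 2 * (3 * a ^+ 3 + r * (a + r) ^+ 2) by field.
by rewrite ler_wpM2l ?cubic_mix // divr_ge0 ?exprn_ge0 // ltW.
Qed.

(* If p + u = 1 then p u <= 1/4, hence 3 p u^2 <= u. *)
Lemma rare_le_lack (R : realFieldType) (p u : R) :
  0 <= p -> 0 <= u -> p + u = 1 -> 3 * p * u ^+ 2 <= u.
Proof.
move=> p0 u0 pu1.
have pu : 4 * (p * u) <= 1 by have := sqr_ge0 (p - u); nra.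
have : 0 <= u * (1 - 3 * (p * u)) by rewrite mulr_ge0 //; lra.
nra.
Qed.

Section UniformDraws.
Variables (R : realFieldType) (k : nat) (x : {set 'I_k} -> nat).

Definition freq (n : nat) : R := n%:R / (Stot x)%:R.

Definition expect1 (f : {set 'I_k} -> R) : R := \sum_A prob1 R x A * f A.

Definition expect3 (F : {set 'I_k} -> {set 'I_k} -> {set 'I_k} -> R) : R :=
  \sum_A \sum_B \sum_C prob3 R x A B C * F A B C.

(* The seed is always present. *)
Lemma Stot_gt0 : (0 < Stot x)%N.
Proof. by rewrite /Stot (bigD1 setT) //= /weight eqxx addn1. Qed.

Lemma freq_ge0 n : 0 <= freq n.
Proof. by rewrite divr_ge0 ?ler0n. Qed.

Lemma prob3_ge0 A B C : 0 <= prob3 R x A B C.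
Proof. by apply: mulr_ge0; [apply: mulr_ge0|]; apply: freq_ge0. Qed.

Lemma expect1_ge0 f : (forall A, 0 <= f A) -> 0 <= expect1 f.
Proof. by move=> f0; apply: sumr_ge0 => A _; rewrite mulr_ge0 ?freq_ge0. Qed.

Lemma expect3_ge0 F : (forall A B C, 0 <= F A B C) -> 0 <= expect3 F.
Proof. by move=> F0; do 3!apply: sumr_ge0 => ? _; rewrite mulr_ge0 ?prob3_ge0. Qed.

Lemma ler_expect1 f g : (forall A, f A <= g A) -> expect1 f <= expect1 g.
Proof. by move=> fg; apply: ler_sum => A _; rewrite ler_wpM2l ?freq_ge0. Qed.

Lemma ler_expect3 F G : (forall A B C, F A B C <= G A B C) -> expect3 F <= expect3 G.
Proof.
move=> FG; rewrite /expect3; do 3!apply: ler_sum => ? _.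
by rewrite ler_wpM2l ?prob3_ge0.
Qed.

Lemma eq_expect3 F G : (forall A B C, F A B C = G A B C) -> expect3 F = expect3 G.
Proof. by move=> FG; do 3!apply: eq_bigr => ? _; rewrite FG. Qed.

Lemma expect3D F G :
  expect3 (fun A B C => F A B C + G A B C) = expect3 F + expect3 G.
Proof.
rewrite /expect3 -big_split; apply: eq_bigr => A _.
rewrite -big_split; apply: eq_bigr => B _.
by rewrite -big_split; apply: eq_bigr => C _; rewrite mulrDr.
Qed.

Lemma expect3_prod f g h :
  expect3 (fun A B C => f A * g B * h C) = expect1 f * expect1 g * expect1 h.
Proof.
rewrite big_distrlr /= big_distrl /=; apply: eq_bigr => A _.
rewrite big_distrl /=; apply: eq_bigr => B _.
rewrite big_distrr /=; apply: eq_bigr => C _.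
by rewrite /prob3; ring.
Qed.

Lemma expect1_indicator (P : pred {set 'I_k}) :
  expect1 (fun A => (P A)%:R) = freq (\sum_(A | P A) weight x A).
Proof.
rewrite /freq natr_sum mulr_suml [in RHS]big_mkcond; apply: eq_bigr => A _.
by case: (P A); rewrite ?mulr1 ?mulr0 ?mul0r.
Qed.

Lemma freq_profile (Q : {set 'I_k}) :
  Q != setT -> expect1 (fun A => (A == Q)%:R) = freq (x Q).
Proof.
move=> /negbTE QT.
by rewrite (expect1_indicator (pred1 Q)) big_pred1_eq /weight QT addn0.
Qed.

Lemma pdl_ge0 (P : {set 'I_k}) : 0 <= pdl R x P.
Proof.
rewrite /pdl; case: ifP => _; [|case: ifP => _];
  [apply: expect3_ge0|apply: expect1_ge0|apply: expect3_ge0] => *; exact: ler0n.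
Qed.

Variable i : 'I_k.

Lemma Sbar_sum : Sbar x i = (\sum_(A : {set 'I_k} | i \notin A) weight x A)%N.
Proof.
by rewrite /Sbar /Stot /Shold (bigID (fun A : {set 'I_k} => i \in A)) /= addKn.
Qed.

Lemma freq_hold : expect1 (fun A => (i \in A)%:R) = freq (Shold x i).
Proof. exact: (expect1_indicator (fun A => i \in A)). Qed.

Lemma freq_lack : expect1 (fun A => (i \notin A)%:R) = freq (Sbar x i).
Proof. by rewrite (expect1_indicator (fun A => i \notin A)) Sbar_sum. Qed.

Lemma freq_hold_lack : freq (Shold x i) + freq (Sbar x i) = 1.
Proof.
have S_neq0 : (Stot x)%:R != 0 :> R by rewrite pnatr_eq0 -lt0n Stot_gt0.
rewrite -mulrDl -natrD /Sbar subnKC ?divff //.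
by rewrite /Shold /Stot [X in (_ <= X)%N](bigID (fun A : {set 'I_k} => i \in A)) leq_addr.
Qed.

Lemma rare_split A B C : (rare A B C i : nat) =
  (((i \in A) && (i \notin B) && (i \notin C)) +
   ((i \notin A) && (i \in B) && (i \notin C)) +
   ((i \notin A) && (i \notin B) && (i \in C)))%N.
Proof. by rewrite /rare /nhold; case: (i \in A); case: (i \in B); case: (i \in C). Qed.

Lemma prob_rare : expect3 (fun A B C => (rare A B C i)%:R) =
  3 * freq (Shold x i) * freq (Sbar x i) ^+ 2.
Proof.
pose hold (A : {set 'I_k}) : R := (i \in A)%:R.
pose lack (A : {set 'I_k}) : R := (i \notin A)%:R.
transitivity (expect3 (fun A B C => hold A * lack B * lack C) +
  expect3 (fun A B C => lack A * hold B * lack C) +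
  expect3 (fun A B C => lack A * lack B * hold C)).
  by rewrite -!expect3D; apply: eq_expect3 => A B C; rewrite rare_split !natrD !natr_and3.
rewrite (expect3_prod hold) (expect3_prod lack hold) (expect3_prod lack lack).
by rewrite freq_hold freq_lack; ring.
Qed.

(* An empty peer gets chunk i only if i is rare in its sample. *)
Lemma dSplus_le_prob_rare :
  dSplus R x i <= 3 * freq (Shold x i) * freq (Sbar x i) ^+ 2.
Proof.
rewrite -prob_rare; apply: ler_expect3 => A B C.
case: ifP => rareA; last by rewrite ler0n.
by rewrite invf_le1 ?ler1n ?ltr0n //; apply/card_gt0P; exists i; rewrite inE.
Qed.

(* A peer lacking i, other than the peers of profile [set~ i], downloads with
   probability at least p u^2: if empty, whenever i is rare; otherwise it holds
   at most k-2 chunks and downloads whenever its draw holds i. *)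
Lemma pdl_lacking (P : {set 'I_k}) : i \notin P -> P != [set~ i] ->
  freq (Shold x i) * freq (Sbar x i) ^+ 2 <= pdl R x P.
Proof.
move=> iP PQ.
have p_ge0 := freq_ge0 (Shold x i); have u_ge0 := freq_ge0 (Sbar x i).
have pu1 := freq_hold_lack.
rewrite /pdl; case: ifP => [_|_]; [|case: ifP => small].
- apply: le_trans (_ : 3 * freq (Shold x i) * freq (Sbar x i) ^+ 2 <= _).
    have : 0 <= freq (Shold x i) * freq (Sbar x i) ^+ 2 by rewrite mulr_ge0 ?exprn_ge0.
    lra.
  rewrite -prob_rare; apply: ler_expect3 => A B C; apply: ler_indicator => rareA.
  by apply/existsP; exists i.
- apply: le_trans (_ : freq (Shold x i) <= _).
    by rewrite -[leRHS]mulr1 ler_wpM2l // expr_le1 //; lra.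
  rewrite -freq_hold; apply: ler_expect1 => A; apply: ler_indicator => iA.
  by apply: contra iP => /subsetP; apply.
- have : P \proper [set~ i] by rewrite properEneq PQ subsetC sub1set inE.
  by move/proper_card; rewrite cardsC1 card_ord; lia.
Qed.

Lemma last_chunk_served (A B C : {set 'I_k}) :
  (2 <= (A == [set~ i]) + (B == [set~ i]) + (C == [set~ i]))%N ->
  (i \in A) || (i \in B) || (i \in C) ->
  [exists j, (j \notin [set~ i]) && (0 < nhold A B C j)%N] &&
  [forall j, (j \in [set~ i]) ==> (2 <= nhold A B C j)%N].
Proof.
move=> twoQ iABC; apply/andP; split.
  apply/existsP; exists i; rewrite !inE eqxx /= /nhold.
  by move: iABC; case: (i \in A); case: (i \in B); case: (i \in C).
apply/forallP => j; apply/implyP => jQ.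
have QD (D : {set 'I_k}) : ((D == [set~ i]) <= (j \in D))%N.
  by case: eqP => // ->; rewrite jQ.
by apply: leq_trans twoQ _; rewrite !leq_add.
Qed.

(* The three ways "two draws are [set~ i], the third holds i" are disjoint
   (no draw of profile [set~ i] holds i), and each triggers a download. *)
Lemma last_chunk_download (A B C : {set 'I_k}) :
  (((A == [set~ i]) && (B == [set~ i]) && (i \in C)) +
   ((A == [set~ i]) && (i \in B) && (C == [set~ i])) +
   ((i \in A) && (B == [set~ i]) && (C == [set~ i])) <=
  [exists j, (j \notin [set~ i]) && (0 < nhold A B C j)%N] &&
  [forall j, (j \in [set~ i]) ==> (2 <= nhold A B C j)%N])%N.
Proof.
have iQ : (i \in [set~ i]) = false by rewrite !inE eqxx.
case: (eqVneq A [set~ i]) => [->|nA]; case: (eqVneq B [set~ i]) => [->|nB];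
  case: (eqVneq C [set~ i]) => [->|nC]; rewrite ?iQ /= ?andbF ?andbT ?addn0 ?add0n //;
  case: (boolP (i \in _)) => // iD; rewrite last_chunk_served ?eqxx ?iD ?orbT //; lia.
Qed.

Lemma pdl_last_chunk : (2 <= k)%N ->
  3 * freq (x [set~ i]) ^+ 2 * freq (Shold x i) <= pdl R x [set~ i].
Proof.
move=> k2.
have QT : [set~ i] != setT by apply/eqP => /setP /(_ i); rewrite !inE eqxx.
pose prof (A : {set 'I_k}) : R := (A == [set~ i])%:R.
pose hold (A : {set 'I_k}) : R := (i \in A)%:R.
have -> : 3 * freq (x [set~ i]) ^+ 2 * freq (Shold x i) =
    expect3 (fun A B C => prof A * prof B * hold C) +
    expect3 (fun A B C => prof A * hold B * prof C) +
    expect3 (fun A B C => hold A * prof B * prof C).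
  rewrite (expect3_prod prof prof) (expect3_prod prof hold) (expect3_prod hold prof).
  by rewrite freq_profile // freq_hold; ring.
rewrite /pdl cardsC1 card_ord ifF; last by lia.
rewrite ifF; last by lia.
rewrite -!expect3D; apply: ler_expect3 => A B C.
by rewrite -!natr_and3 -!natrD ler_nat last_chunk_download.
Qed.

Definition other_lackers : nat :=
  \sum_(P : {set 'I_k} | (i \notin P) && (P != [set~ i])) x P.

Lemma lacking_not_full (P : {set 'I_k}) : i \notin P -> P != setT.
Proof. by apply: contraNneq => ->; rewrite inE. Qed.

Lemma Sbar_split : Sbar x i = (x [set~ i] + other_lackers)%N.
Proof.
have weight_lacking (P : {set 'I_k}) : i \notin P -> weight x P = x P.
  by move=> /lacking_not_full /negbTE PT; rewrite /weight PT addn0.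
rewrite Sbar_sum (bigD1 [set~ i]) ?inE ?eqxx //= weight_lacking ?inE ?eqxx //.
by congr (_ + _)%N; apply: eq_bigr => P /andP[iP _]; rewrite weight_lacking.
Qed.

Lemma rate_ge_lackers : (2 <= k)%N ->
  (x [set~ i])%:R * (3 * freq (x [set~ i]) ^+ 2 * freq (Shold x i)) +
  other_lackers%:R * (freq (Shold x i) * freq (Sbar x i) ^+ 2) <= rate R x.
Proof.
move=> k2.
apply: le_trans (_ : \sum_(P : {set 'I_k} | i \notin P) (x P)%:R * pdl R x P <= _).
  rewrite [leRHS](bigD1 [set~ i]) ?inE ?eqxx //= natr_sum mulr_suml.
  apply: lerD; first by rewrite ler_wpM2l ?ler0n ?pdl_last_chunk.
  by apply: ler_sum => P /andP[iP PQ]; rewrite ler_wpM2l ?ler0n ?pdl_lacking.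
rewrite /rate [leRHS]big_mkcond [leLHS]big_mkcond; apply: ler_sum => P _.
case: (boolP (i \in P)) => iP /=; last by rewrite lacking_not_full.
by case: ifP => _; rewrite ?mulr_ge0 ?ler0n ?pdl_ge0.
Qed.

End UniformDraws.

Unset Implicit Arguments.

Theorem mainTheorem4 (R : realFieldType) (k : nat) (lambda : R)
  (hk : (2 <= k)%N) (hlambda : 0 < lambda)
  (x : {set 'I_k} -> nat) (hx : x setT = 0%N) (i : 'I_k) :
  (Sbar x i)%:R / 6 * dSplus R x i <= rate R x /\
  dSplus R x i <= (Sbar x i)%:R / (Stot x)%:R.
Proof.
have dS_le := dSplus_le_prob_rare R x i.
split.
- apply: le_trans (rate_ge_lackers R x i hk).
  apply: le_trans (ler_wpM2l _ dS_le) _; first by rewrite divr_ge0 ?ler0n.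
  rewrite /freq Sbar_split natrD.
  by apply: lacker_mixing; rewrite ?ler0n ?ltr0n ?Stot_gt0 ?freq_ge0.
- apply: le_trans dS_le _.
  by apply: rare_le_lack; rewrite ?freq_ge0 ?freq_hold_lack.
Qed.
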